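(* Let $\vdash$ be a protoalgebraic logic with the inconsistency lemma and let $n\ge1$. Then $\vdash$ has the bounded top width $n$ law if and only if for every algebra $\boldsymbol{A}$ and every $F\in\mathsf{Spec}_\vdash(\boldsymbol{A})$ there are a positive integer $m\le n$ and maximal elements $G_1,\dots,G_m$ of $\mathsf{Spec}_\vdash(\boldsymbol{A})$ such that every $H\in\mathsf{Spec}_\vdash(\boldsymbol{A})$ with $F\subseteq H$ is contained in some $G_i$.
   Context: A logic $\vdash$ is a finitary, substitution-invariant consequence relation on the formulas $Fm(\vdash)$ of an algebraic language. It is protoalgebraic if there is a nonempty finite $\Delta(x,y)$ with $\emptyset\vdash\Delta(x,x)$ and $x,\Delta(x,y)\vdash y$. A finite set is inconsistent if it derives every formula. $\vdash$ has the inconsistency lemma (IL) if for each $n\ge1$ there is a finite set $\sim_n(x_1,\dots,x_n)$ of formulas such that for all finite $\Gamma\cup\{\varphi_1..\varphi_n\}$: $\Gamma\cup\{\varphi_1..\varphi_n\}$ is inconsistent iff $\Gamma\vdash\sim_n(\varphi_1..\varphi_n)$. Fixing such a family, for a finite set $\Gamma=\{\gamma_1..\gamma_n\}$ write $\sim\Gamma$ for $\sim_n(\gamma_1..\gamma_n)$, and $\sim(\gamma_1..\gamma_n)$ for $\sim\{\gamma_1..\gamma_n\}$. $\vdash$ has the bounded top width $n$ law if it validates the metarule: from $\Gamma,\sim(\sim(\gamma_i^1,\dots,\gamma_i^k)\cup\{\gamma_j^t: j<i,\,t\le k\})\vdash\psi$ for every $i\le n+1$, infer $\Gamma\vdash\psi$,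 for every $k\ge1$ and every finite $\Gamma\cup\{\gamma_1^1..\gamma_{n+1}^k,\psi\}\subseteq Fm(\vdash)$. A deductive filter of $\vdash$ on an algebra $\boldsymbol{A}$ is $F\subseteq A$ such that whenever $\Gamma\vdash\varphi$ and $h\colon\boldsymbol{Fm}(\vdash)\to\boldsymbol{A}$ is a homomorphism with $h[\Gamma]\subseteq F$, then $h(\varphi)\in F$. $\mathsf{Spec}_\vdash(\boldsymbol{A})$ is the poset (under inclusion) of meet irreducible deductive filters, i.e. $F\neq A$ that are not the intersection of two deductive filters both different from $F$. *)

From mathcomp Require Import all_boot.
From Stdlib Require List.
Set Implicit Arguments.
Unset Strict Implicit.
Unset Printing Implicit Defensive.

Record signature := Signature { sop : Type ; sarity : sop -> nat }.

Inductive term (S : signature) : Type :=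
| Var : nat -> term S
| App : forall o : sop S, ('I_(sarity o) -> term S) -> term S.

Arguments Var {S} _.
Arguments App {S} _ _.

Record algebra (S : signature) := Algebra {
  carrier :> Type ;
  interp : forall o : sop S, ('I_(sarity o) -> carrier) -> carrier }.

Definition Fm (S : signature) : algebra S := @Algebra S (term S) (@App S).

Definition is_hom (S : signature) (A B : algebra S) (h : A -> B) : Prop :=
  forall (o : sop S) (a : 'I_(sarity o) -> A),
    h (interp a) = interp (fun j => h (a j)).

Fixpoint subst (S : signature) (f : nat -> term S) (t : term S) : term S :=
  match t with
  | Var i => f i
  | App o a => App o (fun j => subst f (a j))
  end.

Fixpoint vars_in (S : signature) (P : nat -> Prop) (t : term S) : Prop :=
  match t with
  | Var i => P i
  | App o a => forall j, vars_in P (a j)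
  end.

Definition fset (S : signature) := term S -> Prop.
Definition set_of (S : signature) (l : seq (term S)) : fset S :=
  fun x => List.In x l.
Definition img (S : signature) (s : term S -> term S) (G : fset S) : fset S :=
  fun y => exists x, G x /\ y = s x.

Definition is_logic (S : signature) (D : fset S -> term S -> Prop) : Prop :=
  [/\ (forall (G : fset S) phi, G phi -> D G phi),
      (forall (G H : fset S) phi, (forall x, G x -> H x) -> D G phi -> D H phi),
      (forall (G H : fset S) phi,
          (forall x, H x -> D G x) -> D H phi -> D G phi),
      (forall (G : fset S) phi, D G phi ->
          exists l : seq (term S), (forall x, List.In x l -> G x) /\ D (set_of l) phi)
    & (forall (s : Fm S -> Fm S) (G : fset S) phi, is_hom s ->
          D G phi -> D (img s G) (s phi))].

Definition protoalgebraic (S : signature) (D : fset S -> term S -> Prop) : Prop :=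
  exists Delta : seq (term S),
    [/\ Delta <> [::],
        (forall d, List.In d Delta -> vars_in (fun i => i = 0 \/ i = 1) d),
        (forall d, List.In d Delta ->
            D (fun _ => False) (subst (fun i => if i == 1 then Var 0 else Var i) d))
      & D (set_of (Var 0 :: Delta)) (Var 1)].

Definition inconsistent (S : signature) (D : fset S -> term S -> Prop)
  (l : seq (term S)) : Prop := forall phi, D (set_of l) phi.

(* Given a family negf n = ~_n(x_0,...,x_{n-1}), the set ~(phi_1,...,phi_n). *)
Definition negl (S : signature) (negf : nat -> seq (term S))
  (l : seq (term S)) : seq (term S) :=
  map (subst (fun i => nth (Var i) l i)) (negf (size l)).

Definition IL_family (S : signature) (D : fset S -> term S -> Prop)
  (negf : nat -> seq (term S)) : Prop :=
  (forall n, 1 <= n -> forall t, List.In t (negf n) -> vars_in (fun i => i < n) t)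
  /\ (forall (G phis : seq (term S)), phis <> [::] ->
        (inconsistent D (G ++ phis) <->
         forall d, List.In d (negl negf phis) -> D (set_of G) d)).

(* bounded top width n law, w.r.t. the fixed IL family negf;
   gam i t = gamma_{i+1}^{t+1}, i <= n, t < k *)
Definition btw_law (S : signature) (D : fset S -> term S -> Prop)
  (negf : nat -> seq (term S)) (n : nat) : Prop :=
  forall (k : nat), 1 <= k ->
  forall (G : seq (term S)) (gam : nat -> nat -> term S) (psi : term S),
    (forall i, i <= n ->
       D (set_of (G ++ negl negf
                   (negl negf (map (gam i) (iota 0 k))
                    ++ flatten (map (fun j => map (gam j) (iota 0 k)) (iota 0 i)))))
         psi) ->
    D (set_of G) psi.

Definition deductive_filter (S : signature) (D : fset S -> term S -> Prop)
  (A : algebra S) (F : A -> Prop) : Prop :=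
  forall (G : fset S) (phi : term S) (h : Fm S -> A), is_hom h ->
    D G phi -> (forall g, G g -> F (h g)) -> F (h phi).

Definition same_set (T : Type) (X Y : T -> Prop) : Prop := forall x, X x <-> Y x.

Definition in_Spec (S : signature) (D : fset S -> term S -> Prop)
  (A : algebra S) (F : A -> Prop) : Prop :=
  [/\ deductive_filter D F,
      ~ same_set F (fun _ => True)
    & ~ (exists G H : A -> Prop,
           [/\ deductive_filter D G, deductive_filter D H,
               ~ same_set G F, ~ same_set H F
             & same_set F (fun a => G a /\ H a)])].

Definition maximal_in_Spec (S : signature) (D : fset S -> term S -> Prop)
  (A : algebra S) (G : A -> Prop) : Prop :=
  in_Spec D G /\
  forall H : A -> Prop, in_Spec D H -> (forall a, G a -> H a) -> (forall a, H a -> G a).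

(* Protoalgebraicity gives an
   explicit description of the filter generated by [F] together with finitely
   many new elements: derivations are renamed apart and glued along the set
   [Delta(x, y)], which holds of any two equal values. With it the bounded top
   width law, a metarule on formulas, transfers to every filter [F].
   If [M_0, ..., M_n] were distinct maximal filters above [F] in the spectrum,
   separating elements give lists [L_i] with [~L_i] in every [M_j], j <> i, and
   [~~L_i] in [M_i]. The law for [gamma_i := ~L_i] makes [F] the meet of the
   n + 1 filters generated by [F] and [~(~gamma_i, gamma_0, ..., gamma_(i-1))];
   as [F] is meet irreducible it contains one of them, and then [M_i] contains
   both that list and its negation, so it is not proper. Hence a longest family
   of distinct maximal filters above [F] has at most n members, and it covers.
   Conversely, if [Gamma] does not derive [psi], a theory omitting [psi] and
   maximal for this is in the spectrum; adding the premises of the rule yields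
   n + 1 consistent theories, and by the pigeonhole principle two of their
   maximal extensions lie below the same covering filter, which then contains
   some [gamma_i] together with [~gamma_i]. *)

From mathcomp Require Import all_boot boolp zify.
From mathcomp Require classical_sets.
From Stdlib Require List.
From Pilot Require Import Defs.
Set Implicit Arguments.
Unset Strict Implicit.
Unset Printing Implicit Defensive.

Lemma In_nth (T : Type) (x0 : T) (s : seq T) i : i < size s -> List.In (nth x0 s i) s.
Proof. by elim: s i => [|x s IH] [|i] //= Hi; [left|right; apply: IH]. Qed.

Lemma In_nthP (T : Type) (x0 : T) (s : seq T) x :
  List.In x s -> exists2 i, i < size s & nth x0 s i = x.
Proof.
elim: s => [|y s IH] //= [->|/IH [i Hi <-]]; first by exists 0.
by exists i.+1.
Qed.

Lemma In_iota i m k : List.In i (iota m k) <-> m <= i < m + k.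
Proof. by rewrite (List.in_seq k m i); lia. Qed.

Lemma In_flatten (T : Type) (x : T) (L : seq (seq T)) :
  List.In x (flatten L) <-> exists l, List.In l L /\ List.In x l.
Proof. exact: List.in_concat. Qed.

Lemma In_map (T U : Type) (f : T -> U) (s : seq T) y :
  List.In y (map f s) <-> exists2 x, List.In x s & y = f x.
Proof.
rewrite (List.in_map_iff f s y).
by split=> [[x [<- Hx]]|[x Hx ->]]; exists x.
Qed.

Lemma pigeonhole m (f : nat -> nat) : (forall i, i <= m -> f i < m) ->
  exists i i', [/\ i < i', i' <= m & f i = f i'].
Proof.
move=> Hf; have : ~~ uniq (map f (iota 0 m.+1)).
  apply/negP => /uniq_leq_size Hsize.
  suff : size (map f (iota 0 m.+1)) <= size (iota 0 m) by rewrite size_map !size_iota ltnn.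
  by apply: Hsize => x /mapP [i]; rewrite !mem_iota /= add0n ltnS => Hi ->; apply: Hf.
case/(uniqPn 0) => i [i' [Hii' Hi' Heq]]; rewrite size_map size_iota in Hi'.
exists i, i'; split=> //; move: Heq.
by rewrite !(nth_map 0) ?size_iota ?nth_iota //; apply: ltn_trans Hi'.
Qed.

Section Terms.
Variable S : signature.

Fixpoint eval (A : algebra S) (v : nat -> A) (t : term S) : A :=
  match t with
  | Var i => v i
  | App o a => interp (fun j => eval v (a j))
  end.

Lemma eq_eval_in (A : algebra S) (P : nat -> Prop) (v w : nat -> A) t :
  vars_in P t -> (forall i, P i -> v i = w i) -> eval v t = eval w t.
Proof.
elim: t => [i|o a IH] /= Ht Hvw; first exact: Hvw.
by congr interp; apply/funext => j; apply: IH.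
Qed.

Lemma eval_subst (A : algebra S) (v : nat -> A) f t :
  eval v (subst f t) = eval (fun i => eval v (f i)) t.
Proof. by elim: t => [i|o a IH] //=; congr interp; apply/funext => j. Qed.

Lemma eval_FmE (v : nat -> term S) t : eval (A := Fm S) v t = subst v t.
Proof. by elim: t => [i|o a IH] //=; congr App; apply/funext => j. Qed.

Lemma hom_eval (A : algebra S) (h : Fm S -> A) :
  is_hom h -> forall t, h t = eval (fun i => h (Var i)) t.
Proof.
move=> Hh; elim=> [i|o a IH] //=.
rewrite -[App o a]/(@interp S (Fm S) o a) Hh.
by congr interp; apply/funext => j.
Qed.

Lemma subst_subst f g (t : term S) :
  subst f (subst g t) = subst (fun i => subst f (g i)) t.
Proof. by elim: t => [i|o a IH] //=; congr App; apply/funext => j. Qed.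

Lemma eq_subst_in (P : nat -> Prop) f g (t : term S) :
  vars_in P t -> (forall i, P i -> f i = g i) -> subst f t = subst g t.
Proof. by move=> Ht Hfg; rewrite -!eval_FmE; apply: (eq_eval_in (A := Fm S) Ht). Qed.

Lemma subst_Var (t : term S) : subst Var t = t.
Proof. by elim: t => [i|o a IH] //=; congr App; apply/funext => j. Qed.

Lemma eval_Var (t : term S) : eval (A := Fm S) Var t = t.
Proof. by rewrite eval_FmE subst_Var. Qed.

End Terms.

Section Logic.
Variables (S : signature) (D : fset S -> term S -> Prop).
Hypothesis HD : is_logic D.

Lemma deriv_refl G phi : G phi -> D G phi.
Proof. by case: HD => Hrefl _ _ _ _; apply: Hrefl. Qed.

Lemma deriv_mono G H phi : (forall x, G x -> H x) -> D G phi -> D H phi.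
Proof. by case: HD => _ Hmono _ _ _; apply: Hmono. Qed.

Lemma deriv_cut G H phi : (forall x, H x -> D G x) -> D H phi -> D G phi.
Proof. by case: HD => _ _ Hcut _ _; apply: Hcut. Qed.

Lemma deriv_finite G phi :
  D G phi -> exists2 l, (forall x, List.In x l -> G x) & D (set_of l) phi.
Proof. by case: HD => _ _ _ Hfin _ /Hfin [l []]; exists l. Qed.

Lemma deriv_finite_seq X K : (forall x, List.In x K -> D X x) ->
  exists2 l, (forall g, List.In g l -> X g) & forall x, List.In x K -> D (set_of l) x.
Proof.
elim: K => [|x K IH] HK; first by exists [::].
have [l1 Hl1 HKl1] := IH (fun y Hy => HK y (or_intror Hy)).
have [l2 Hl2 Hxl2] := deriv_finite (HK x (or_introl erefl)).
exists (l1 ++ l2) => [g /List.in_app_iff [/Hl1|/Hl2] //|y [<-|/HKl1]].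
  by apply: deriv_mono Hxl2 => z Hz; apply/List.in_app_iff; right.
by apply: deriv_mono => z Hz; apply/List.in_app_iff; left.
Qed.

Lemma deriv_subst f l phi :
  D (set_of l) phi -> D (set_of (map (subst f) l)) (subst f phi).
Proof.
case: HD => _ _ _ _ /(_ (subst f) _ _ (fun _ _ => erefl)) H /H.
by apply: deriv_mono => x [y [Hy ->]]; apply/In_map; exists y.
Qed.

Definition full (A : Type) (X : A -> Prop) := forall a, X a.

Definition has_theorems (A : algebra S) (X : A -> Prop) :=
  forall phi (v : nat -> A), D (fun _ => False) phi -> X (eval v phi).

Lemma filter_eval (A : algebra S) (F : A -> Prop) l phi (v : nat -> A) :
  deductive_filter D F -> D (set_of l) phi ->
  (forall g, List.In g l -> F (eval v g)) -> F (eval v phi).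
Proof. by move=> HF; apply: (HF _ _ (eval v)) => //. Qed.

Lemma filter_has_theorems (A : algebra S) (F : A -> Prop) :
  deductive_filter D F -> has_theorems F.
Proof. by move=> HF phi v Hphi; apply: (HF _ _ (eval v) _ Hphi). Qed.

Lemma filterP (A : algebra S) (F : A -> Prop) :
  (forall l phi (v : nat -> A), D (set_of l) phi ->
     (forall g, List.In g l -> F (eval v g)) -> F (eval v phi)) ->
  deductive_filter D F.
Proof.
move=> H G phi h Hh /deriv_finite [l Hl Hd] HG.
rewrite (hom_eval Hh); apply: H Hd _ => g /Hl /HG; by rewrite (hom_eval Hh).
Qed.

Lemma filter_bigcap (A : algebra S) (Es : seq (A -> Prop)) :
  (forall E, List.In E Es -> deductive_filter D E) ->
  deductive_filter D (fun a => forall E, List.In E Es -> E a).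
Proof.
move=> HEs G phi h Hh Hd HG E HE.
by apply: (HEs E HE G phi h Hh Hd) => g /HG; apply.
Qed.

Lemma theory_filter (X : fset S) : deductive_filter D (A := Fm S) (D X).
Proof.
apply: filterP => l phi v Hd Hl; rewrite eval_FmE.
apply: (deriv_cut (H := set_of (map (subst v) l))); last exact: deriv_subst.
by move=> x /In_map [g Hg ->]; rewrite -eval_FmE; apply: Hl.
Qed.

Lemma theory_closed (F : Fm S -> Prop) phi : deductive_filter D F -> D F phi -> F phi.
Proof.
move=> HF /deriv_finite [l Hl Hd].
have := filter_eval (A := Fm S) (v := Var) HF Hd; rewrite eval_Var; apply=> g /Hl.
by rewrite eval_Var.
Qed.

End Logic.

Section Protoalgebraic.
Variables (S : signature) (D : fset S -> term S -> Prop).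
Hypothesis HD : is_logic D.
Variable Delta : seq (term S).
Hypothesis Delta_nonempty : Delta <> [::].
Hypothesis Delta_vars : forall d, List.In d Delta -> vars_in (fun i => i = 0 \/ i = 1) d.
Hypothesis Delta_refl : forall d, List.In d Delta ->
  D (fun _ => False) (subst (fun i => if i == 1 then Var 0 else Var i) d).
Hypothesis Delta_mp : D (set_of (Var 0 :: Delta)) (Var 1).
Variable negf : nat -> seq (term S).
Hypothesis negf_vars :
  forall n, 1 <= n -> forall t, List.In t (negf n) -> vars_in (fun i => i < n) t.
Hypothesis negf_IL : forall G phis : seq (term S), phis <> [::] ->
  (inconsistent D (G ++ phis) <->
   forall d, List.In d (negl negf phis) -> D (set_of G) d).

Local Notation negl := (negl negf).

Definition Delta_at (s t : term S) :=
  map (subst (fun i => if i == 0 then s else if i == 1 then t else Var i)) Delta.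

Lemma Delta_at_eval (A : algebra S) (X : A -> Prop) (v : nat -> A) s t :
  has_theorems D X -> eval v s = eval v t ->
  forall x, List.In x (Delta_at s t) -> X (eval v x).
Proof.
move=> HX Hst x /In_map [d Hd ->].
set w := fun i => if i == 0 then eval v s else v i.
suff -> : eval v (subst (fun i => if i == 0 then s else if i == 1 then t else Var i) d) =
    eval w (subst (fun i => if i == 1 then Var 0 else Var i) d).
  exact/HX/Delta_refl.
by rewrite !eval_subst; apply: (eq_eval_in (A := A) (Delta_vars Hd)) => i [->|->].
Qed.

Lemma Delta_at_mp (G : fset S) s t :
  (forall x, List.In x (Delta_at s t) -> G x) -> D G s -> D G t.
Proof.
move=> HG Hs; apply: (deriv_cut HD (H := set_of (s :: Delta_at s t))).
  by move=> x [<-|/HG Hx] //; apply: deriv_refl.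
exact: (deriv_subst HD _ Delta_mp).
Qed.

Lemma exists_theorem : exists phi, D (fun _ => False) phi.
Proof.
case: Delta Delta_nonempty Delta_refl => [//|d ds] _ Hrefl.
by eexists; apply: Hrefl; left.
Qed.

Lemma negl_subst f L : L <> [::] ->
  negl (map (subst f) L) = map (subst f) (negl L).
Proof.
move=> HL; have HsL : 1 <= size L by case: L HL.
rewrite /Defs.negl size_map -map_comp; apply: List.map_ext_in => d Hd /=.
rewrite subst_subst; apply: (eq_subst_in (negf_vars HsL Hd)) => i Hi.
by rewrite (nth_map (Var i)).
Qed.

Lemma inconsistent_negl L : L <> [::] -> inconsistent D (negl L ++ L).
Proof. by move=> HL; apply/negf_IL => // d Hd; apply: deriv_refl. Qed.

(* Inconsistency of [~L, L] is instantiated at the variables [x_0 .. x_(m-1)]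
   so that the fresh variable [x_m] can be sent to an arbitrary element. *)
Lemma filter_negl_full (A : algebra S) (F : A -> Prop) L (v : nat -> A) :
  deductive_filter D F -> L <> [::] -> (forall g, List.In g L -> F (eval v g)) ->
  (forall d, List.In d (negl L) -> F (eval v d)) -> full F.
Proof.
move=> HF HL HLF HnLF c; set m := size L.
have Hm : 1 <= m by rewrite /m; case: (L) HL.
pose xs : seq (term S) := map Var (iota 0 m).
have Hxs : xs <> [::] by rewrite /xs; case: (m) Hm.
set v' := fun i => if i < m then eval v (nth (Var i) L i) else c.
have -> : c = eval v' (Var m) by rewrite /= /v' ltnn.
apply: (filter_eval HF (inconsistent_negl Hxs (Var m))) => g /List.in_app_iff [|].
- rewrite /Defs.negl /xs size_map size_iota => /In_map [d Hd ->].
  suff -> : eval v' (subst (fun i => nth (Var i) xs i) d) =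
            eval v (subst (fun i => nth (Var i) L i) d).
    by apply: HnLF; apply/In_map; exists d.
  rewrite !eval_subst; apply: (eq_eval_in (A := A) (negf_vars Hm Hd)) => i Hi.
  by rewrite (nth_map 0) ?size_iota // nth_iota //= /v' Hi.
- move=> /In_map [i /In_iota Hi ->]; rewrite /= /v' ifT; last by lia.
  by apply/HLF/In_nth; lia.
Qed.

Definition nontrivial := ~ D (fun _ => False) (Var 0).

Lemma negf_nonempty m : nontrivial -> 1 <= m -> negf m <> [::].
Proof.
move=> HNT Hm Hnil; apply: HNT.
have [phi0 Hphi0] := exists_theorem.
set L := nseq m (Var 0 : term S).
have HL : L <> [::] by rewrite /L; case: (m) Hm.
have HLx1 : D (set_of L) (Var 1).
  by apply: (negf_IL [::] HL).2 => d; rewrite /Defs.negl size_nseq Hnil.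
have := deriv_subst HD (fun i => if i == 0 then phi0 else Var 0) HLx1.
apply: (deriv_cut HD); rewrite /L map_nseq /=.
by elim: (m) => [|k IH] //= x [<-|/IH].
Qed.

Lemma negl_nonempty L : nontrivial -> L <> [::] -> negl L <> [::].
Proof.
move=> HNT HL; have HsL : 1 <= size L by case: L HL.
by rewrite /Defs.negl; have := negf_nonempty HNT HsL; case: (negf _).
Qed.

Lemma Spec_nontrivial (A : algebra S) (F : A -> Prop) : in_Spec D F -> nontrivial.
Proof.
case=> HF Hnfull _ Hx; apply: Hnfull => a; split=> // _.
exact: (filter_has_theorems HF (fun _ => a) Hx).
Qed.

Lemma underivable_nontrivial G psi : ~ D (set_of G) psi -> nontrivial.
Proof.
move=> Hpsi Hx; apply: Hpsi.
by apply: (deriv_mono HD _ (deriv_subst HD (fun _ => psi) (l := [::]) Hx)) => x [].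
Qed.

Definition fg (A : algebra S) (X : A -> Prop) (b : A) :=
  exists l phi (v : nat -> A),
    [/\ forall g, List.In g l -> X (eval v g), D (set_of l) phi & eval v phi = b].

Lemma fg_sub (A : algebra S) (X : A -> Prop) a : X a -> fg X a.
Proof.
move=> Ha; exists [:: Var 0], (Var 0), (fun _ => a).
by split=> [g [<-|[]]||] //; apply: (deriv_refl HD); left.
Qed.

Lemma fg_mono (A : algebra S) (X Y : A -> Prop) a :
  (forall x, X x -> Y x) -> fg X a -> fg Y a.
Proof. by move=> HXY [l [phi [v [Hl Hd Hb]]]]; exists l, phi, v; split=> // g /Hl /HXY. Qed.

Definition adjoin (A : algebra S) (X : A -> Prop) (u : nat -> A) P a :=
  X a \/ exists2 pi, List.In pi P & a = eval u pi.

Lemma adjoin_has_theorems (A : algebra S) (X : A -> Prop) u P :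
  has_theorems D X -> has_theorems D (adjoin X u P).
Proof. by move=> HX phi v Hphi; left; apply: HX. Qed.

(* Variables are renamed apart: in a normal form over [u] the even variables
   carry the fixed valuation [u] and the odd ones are free. *)
Definition to_even := subst (fun q => @Var S q.*2).
Definition to_odd := subst (fun q => @Var S q.*2.+1).

Definition interleave (A : Type) (u w : nat -> A) x := if odd x then w x./2 else u x./2.

Lemma interleave_even (A : Type) (u w : nat -> A) q : interleave u w q.*2 = u q.
Proof. by rewrite /interleave odd_double half_double. Qed.

Lemma interleave_odd (A : Type) (u w : nat -> A) q : interleave u w q.*2.+1 = w q.
Proof. by rewrite /interleave /= odd_double uphalf_double. Qed.

Lemma eval_to_even (A : algebra S) (v : nat -> A) t :
  eval v (to_even t) = eval (fun q => v q.*2) t.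
Proof. by rewrite eval_subst. Qed.

Lemma eval_to_odd (A : algebra S) (u w : nat -> A) t :
  eval (interleave u w) (to_odd t) = eval w t.
Proof. by rewrite eval_subst; congr eval; apply/funext => q; apply: interleave_odd. Qed.

(* An element of [adjoin X u P] used as a premise is replaced by its odd copy,
   bridged by [Delta] to the even copy of a formula of [P] when it is not in [X]. *)
Lemma adjoin_premises (A : algebra S) (X : A -> Prop) (u w : nat -> A) P l :
  has_theorems D X -> (forall g, List.In g l -> adjoin X u P (eval w g)) ->
  exists2 G, (forall x, List.In x G -> X (eval (interleave u w) x)) &
    forall g, List.In g l -> D (set_of (G ++ map to_even P)) (to_odd g).
Proof.
move=> HX; elim: l => [|g l IH] Hl; first by exists [::].
have [G HG Hder] := IH (fun g' Hg' => Hl g' (or_intror Hg')).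
have Hmono G' x : D (set_of (G ++ map to_even P)) x ->
    D (set_of (G' ++ G ++ map to_even P)) x.
  by apply: (deriv_mono HD) => y Hy; apply/List.in_app_iff; right.
case: (Hl g (or_introl erefl)) => [HgX|[pi Hpi Hgpi]].
  exists (to_odd g :: G).
    by move=> x [<-|/HG //]; rewrite eval_to_odd.
  move=> g' [<-|/Hder/(Hmono [:: to_odd g]) //].
  by apply: (deriv_refl HD); left.
exists (Delta_at (to_even pi) (to_odd g) ++ G).
  move=> x /List.in_app_iff [|/HG //]; apply: Delta_at_eval => //.
  rewrite eval_to_odd eval_to_even Hgpi; congr eval.
  by apply/funext => q; rewrite interleave_even.
move=> g'; rewrite -catA => -[<-|/Hder/Hmono //].
apply: (Delta_at_mp (s := to_even pi)).
  by move=> x Hx; apply/List.in_app_iff; left.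
apply: (deriv_refl HD); apply/List.in_app_iff; right; apply/List.in_app_iff; right.
by apply/In_map; exists pi.
Qed.

Lemma adjoin_normal_form (A : algebra S) (X : A -> Prop) (u : nat -> A) P b :
  has_theorems D X -> fg (adjoin X u P) b ->
  exists G phi (v : nat -> A),
    [/\ forall g, List.In g G -> X (eval v g), forall q, v q.*2 = u q,
        D (set_of (G ++ map to_even P)) phi & eval v phi = b].
Proof.
move=> HX [l [phi [w [Hl Hd <-]]]].
have [G HG Hder] := adjoin_premises HX Hl.
exists G, (to_odd phi), (interleave u w); split=> //.
- exact: interleave_even.
- apply: (deriv_cut HD (H := set_of (map to_odd l))); last exact: deriv_subst.
  by move=> x /In_map [g Hg ->]; apply: Hder.
- exact: eval_to_odd.
Qed.

Lemma interleave_halves (A : Type) (v : nat -> A) :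
  interleave (fun q => v q.*2) (fun q => v q.*2.+1) = v.
Proof.
apply/funext => x; rewrite /interleave.
by case: ifP => Hx; congr v; rewrite -[RHS]odd_double_half Hx.
Qed.

(* The odd variables are split once more between the two valuations. *)
Lemma merge_valuations (A : algebra S) (u v1 v2 : nat -> A) :
  (forall q, v1 q.*2 = u q) -> (forall q, v2 q.*2 = u q) ->
  exists V r1 r2, [/\ forall q, V q.*2 = u q,
    forall t, eval V (subst r1 t) = eval v1 t, forall t, eval V (subst r2 t) = eval v2 t,
    forall t, subst r1 (to_even t) = to_even t & forall t, subst r2 (to_even t) = to_even t].
Proof.
move=> Hv1 Hv2.
pose V := interleave u (interleave (fun q => v1 q.*2.+1) (fun q => v2 q.*2.+1)).
pose r (c : nat -> nat) x : term S := if odd x then Var (c x./2).*2.+1 else Var x.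
have r_even c t : subst (r c) (to_even t) = to_even t.
  by rewrite subst_subst; congr subst; apply/funext => q /=; rewrite /r odd_double.
have eval_r f (v : nat -> A) : (forall q, v q.*2 = u q) ->
    (forall q, V (f q).*2.+1 = v q.*2.+1) -> forall t, eval V (subst (r f) t) = eval v t.
  move=> Hv Hf t; rewrite eval_subst -[in RHS](interleave_halves v); congr eval.
  apply/funext => x; rewrite /r /interleave; case Hx: (odd x) => /=; first exact: Hf.
  by rewrite /V /interleave Hx Hv.
exists V, (r (fun q => q.*2)), (r (fun q => q.*2.+1)); split=> //.
- exact: interleave_even.
- by apply: eval_r => // q; rewrite /V !interleave_odd interleave_even.
- by apply: eval_r => // q; rewrite /V !interleave_odd.
Qed.

Lemma common_normal_form (A : algebra S) (X : A -> Prop) (u : nat -> A) r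
    (P : nat -> seq (term S)) (b : nat -> A) :
  has_theorems D X -> (forall j, j < r -> fg (adjoin X u (P j)) (b j)) ->
  exists G (v : nat -> A) (phi : nat -> term S),
    [/\ forall g, List.In g G -> X (eval v g), forall q, v q.*2 = u q &
        forall j, j < r ->
          D (set_of (G ++ map to_even (P j))) (phi j) /\ eval v (phi j) = b j].
Proof.
move=> HX; elim: r => [|r IH] Hb.
  by exists [::], (interleave u u), (fun _ => Var 0); split=> // q; apply: interleave_even.
have [G1 [v1 [phi1 [HG1 Hv1 Hphi1]]]] := IH (fun j Hj => Hb j (ltnW Hj)).
have [G2 [phi2 [v2 [HG2 Hv2 Hphi2 Hb2]]]] := adjoin_normal_form HX (Hb r (ltnSn r)).
have [V [r1 [r2 [HV Hr1 Hr2 Hr1e Hr2e]]]] := merge_valuations Hv1 Hv2.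
have rename_deriv rho G phi Q : (forall t, subst rho (to_even t) = to_even t) ->
    D (set_of (G ++ map to_even Q)) phi ->
    D (set_of (map (subst rho) G ++ map to_even Q)) (subst rho phi).
  move=> Hrho /(deriv_subst HD rho); rewrite map_cat -map_comp.
  by rewrite (eq_map Hrho).
exists (map (subst r1) G1 ++ map (subst r2) G2), V.
exists (fun j => if j < r then subst r1 (phi1 j) else subst r2 phi2); split=> //.
  by move=> g /List.in_app_iff [] /In_map [x Hx ->]; rewrite ?Hr1 ?Hr2; [apply: HG1|apply: HG2].
move=> j; rewrite ltnS leq_eqVlt => /orP [/eqP ->|Hj]; rewrite ?ltnn ?Hj.
  split; last by rewrite Hr2.
  apply: (deriv_mono HD) (rename_deriv _ _ _ _ Hr2e Hphi2) => x.
  by rewrite /Defs.set_of !List.in_app_iff; tauto.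
have [Hd Hbj] := Hphi1 j Hj; split; last by rewrite Hr1.
apply: (deriv_mono HD) (rename_deriv _ _ _ _ Hr1e Hd) => x.
by rewrite /Defs.set_of !List.in_app_iff; tauto.
Qed.

Lemma add_bridges (A : algebra S) (X : A -> Prop) (v : nat -> A) G r
    (E : nat -> seq (term S)) (phi t : nat -> term S) :
  has_theorems D X -> (forall g, List.In g G -> X (eval v g)) ->
  (forall j, j < r -> D (set_of (G ++ E j)) (phi j) /\ eval v (phi j) = eval v (t j)) ->
  exists2 G', forall g, List.In g G' -> X (eval v g) &
    forall j, j < r -> D (set_of (G' ++ E j)) (t j).
Proof.
move=> HX HG Hphi.
exists (G ++ flatten (map (fun j => Delta_at (phi j) (t j)) (iota 0 r))).
  move=> g /List.in_app_iff [/HG //|/In_flatten [p [/In_map [j /In_iota Hj ->] Hp]]].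
  by apply: (Delta_at_eval HX _ Hp); apply: (Hphi j _).2; lia.
move=> j Hj; have [Hd _] := Hphi j Hj.
apply: (Delta_at_mp (s := phi j)).
  move=> x Hx; rewrite -catA; apply/List.in_app_iff; right; apply/List.in_app_iff; left.
  apply/In_flatten; exists (Delta_at (phi j) (t j)); split=> //.
  by apply/In_map; exists j => //; apply/In_iota; lia.
apply: (deriv_mono HD _ Hd) => x; rewrite /Defs.set_of -catA !List.in_app_iff; tauto.
Qed.

Lemma fg_filter (A : algebra S) (X : A -> Prop) :
  has_theorems D X -> deductive_filter D (fg X).
Proof.
move=> HX; apply: (filterP HD) => l psi w Hd Hl.
have [G [v [phi [HG Hv Hphi]]]] := common_normal_form (u := w) (r := size l)
  (P := fun _ => [::]) (b := fun j => eval w (nth (Var 0) l j)) HX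
  (fun j Hj => fg_mono (fun x Hx => or_introl Hx) (Hl _ (In_nth _ Hj))).
have Hw t : eval v (to_even t) = eval w t.
  by rewrite eval_to_even; congr eval; apply/funext.
have [G' HG' HdG'] := add_bridges (t := fun j => to_even (nth (Var 0) l j)) HX HG
  (fun j Hj => conj (Hphi j Hj).1 (etrans (Hphi j Hj).2 (esym (Hw _)))).
exists G', (to_even psi), v; split=> //.
apply: (deriv_cut HD (H := set_of (map to_even l))); last exact: deriv_subst.
move=> x /In_map [g Hg ->]; have [j Hj <-] := In_nthP (Var 0) Hg.
by have := HdG' j Hj; rewrite cats0.
Qed.

Definition maximal_filter (A : algebra S) (M : A -> Prop) :=
  [/\ deductive_filter D M, ~ full M &
      forall N, deductive_filter D N -> ~ full N -> (forall a, M a -> N a) ->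
        forall a, N a -> M a].

Lemma maximal_filter_above (A : algebra S) (M N : A -> Prop) :
  maximal_filter M -> deductive_filter D N -> (forall a, M a -> N a) ->
  ~ same_set N M -> full N.
Proof.
case=> _ _ HMmax HN HMN HNM; apply: contrapT => HNfull; apply: HNM => a.
by split; [apply: HMmax|apply: HMN].
Qed.

Lemma maximal_filters_separate (A : algebra S) (M N : A -> Prop) :
  maximal_filter M -> maximal_filter N -> ~ same_set M N ->
  exists a, M a /\ ~ N a.
Proof.
move=> HM [HN HNfull _] HMN; apply: contrapT => Hsub; apply: HNfull.
apply: (maximal_filter_above HM HN) => [a Ma|HNM]; last by apply: HMN => a; split=> /HNM.
by apply: contrapT => Na; apply: Hsub; exists a.
Qed.

Lemma maximal_filter_negl (A : algebra S) (M : A -> Prop) L (u : nat -> A) :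
  maximal_filter M -> L <> [::] -> (exists2 g, List.In g L & ~ M (eval u g)) ->
  forall d, List.In d (negl L) -> M (eval u d).
Proof.
move=> HMmax HL [g Hg HgM]; have [HM _ _] := HMmax.
have HMth := filter_has_theorems HM.
have HMLfull : full (fg (adjoin M u L)).
  apply: (maximal_filter_above HMmax); first exact/fg_filter/adjoin_has_theorems.
    by move=> a Ma; apply: fg_sub; left.
  by move=> Hsame; apply/HgM/Hsame/fg_sub; right; exists g.
set r := size (negl L); pose d_ j := nth (Var 0) (negl L) j.
have [G [v [phi [HG Hv Hphi]]]] := common_normal_form (r := r) (P := fun _ => L)
  (b := fun j => eval u (d_ j)) HMth (fun j _ => HMLfull _).
have Hu t : eval v (to_even t) = eval u t.
  by rewrite eval_to_even; congr eval; apply/funext.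
have [G' HG' HdG'] := add_bridges (t := fun j => to_even (d_ j)) HMth HG
  (fun j Hj => conj (Hphi j Hj).1 (etrans (Hphi j Hj).2 (esym (Hu _)))).
have HLe : map to_even L <> [::] by case: (L) HL.
have Hincons : inconsistent D (G' ++ map to_even L).
  move=> psi; apply: (deriv_cut HD _ (inconsistent_negl HLe psi)) => x.
  move=> /List.in_app_iff [|Hx]; last first.
    by apply: (deriv_refl HD); apply/List.in_app_iff; right.
  rewrite negl_subst // => /In_map [d Hd ->].
  by have [j Hj <-] := In_nthP (Var 0) Hd; apply: HdG'.
move=> d Hd; rewrite -Hu; apply: (filter_eval HM _ HG').
by apply: (negf_IL G' HLe).1 => //; rewrite negl_subst //; apply/In_map; exists d.
Qed.

Lemma maximal_filter_double_negl (A : algebra S) (M : A -> Prop) L (u : nat -> A) :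
  nontrivial -> maximal_filter M -> L <> [::] -> (forall g, List.In g L -> M (eval u g)) ->
  forall d, List.In d (negl (negl L)) -> M (eval u d).
Proof.
move=> HNT HMmax HL HLM; have [HM HMfull _] := HMmax.
apply: (maximal_filter_negl HMmax (negl_nonempty HNT HL)).
apply: contrapT => HnLM; apply: HMfull; apply: (filter_negl_full HM HL HLM) => d Hd.
by apply: contrapT => Hnd; apply: HnLM; exists d.
Qed.

Definition chain (T : Type) (C : (T -> Prop) -> Prop) :=
  forall X Y, C X -> C Y -> (forall a, X a -> Y a) \/ (forall a, Y a -> X a).

Lemma chain_In (A : algebra S) (C : (A -> Prop) -> Prop) (v : nat -> A) l :
  (exists X, C X) -> chain C ->
  (forall g, List.In g l -> exists2 X, C X & X (eval v g)) ->
  exists2 X, C X & forall g, List.In g l -> X (eval v g).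
Proof.
move=> [X0 HX0] HC; elim: l => [|g l IH] Hl; first by exists X0.
have [X1 HX1 Hl1] := IH (fun g' Hg' => Hl g' (or_intror Hg')).
have [X2 HX2 Hg2] := Hl g (or_introl erefl).
case: (HC _ _ HX1 HX2) => H12; first by exists X2 => // g' [<-|/Hl1/H12].
by exists X1 => // g' [<-|/Hl1] //; apply: H12.
Qed.

Lemma chain_filter (A : algebra S) (C : (A -> Prop) -> Prop) :
  (exists X, C X) -> chain C -> (forall X, C X -> deductive_filter D X) ->
  deductive_filter D (fun a => exists2 X, C X & X a).
Proof.
move=> HC0 HC Hfilt; apply: (filterP HD) => l phi v Hd Hl.
have [X HX HlX] := chain_In HC0 HC Hl.
by exists X => //; apply: filter_eval (Hfilt X HX) Hd HlX.
Qed.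

Lemma filter_zorn (A : algebra S) (F0 : A -> Prop) (Q : (A -> Prop) -> Prop) :
  deductive_filter D F0 -> Q F0 ->
  (forall C, (exists X, C X) -> chain C ->
     (forall X, C X -> [/\ deductive_filter D X, Q X & forall a, F0 a -> X a]) ->
     Q (fun a => exists2 X, C X & X a)) ->
  exists M, [/\ deductive_filter D M, Q M, (forall a, F0 a -> M a) &
    forall N, deductive_filter D N -> Q N -> (forall a, M a -> N a) -> forall a, N a -> M a].
Proof.
move=> HF0 HQ0 HQchain.
pose good X := [/\ deductive_filter D X, Q X & forall a, F0 a -> X a].
pose T := {X : A -> Prop | good X}.
pose R (s t : T) := `[< forall a, sval s a -> sval t a >].
have F0_good : good F0 by split=> // a.
have [|||[M HM] HMmax] := @classical_sets.ZL_preorder T (exist good F0 F0_good) R.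
- by move=> s; apply/asboolP.
- by move=> r s t /asboolP Hrs /asboolP Hst; apply/asboolP => a /Hrs/Hst.
- move=> C HC; case: (pselect (exists s, C s)) => [[s0 Hs0]|HC0]; last first.
    by exists (exist good F0 F0_good) => s Hs; case: HC0; exists s.
  pose CX X := exists2 s, C s & sval s = X.
  have HCX X : CX X -> good X by case=> s _ <-; apply: svalP.
  have HCXchain : chain CX.
    by move=> _ _ [s Hs <-] [t Ht <-]; case: (HC s t Hs Ht) => /asboolP; [left|right].
  have HCXne : exists X, CX X by exists (sval s0), s0.
  have Hub : good (fun a => exists2 X, CX X & X a).
    split; first by apply: chain_filter HCXne HCXchain _ => X /HCX [].
      exact: HQchain HCXne HCXchain HCX.
    by move=> a Ha; exists (sval s0); [exists s0|have [_ _] := svalP s0; apply].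
  by exists (exist good _ Hub) => s Hs; apply/asboolP => a Ha; exists (sval s) => //; exists s.
- have [HMf HQM HF0M] := HM; exists M; split=> // N HN HQN HMN.
  have HgoodN : good N by split=> // a /HF0M/HMN.
  by move: (HMmax (exist good N HgoodN) (asboolT HMN)) => /asboolP.
Qed.

Lemma filter_maximal_extension (A : algebra S) (F : A -> Prop) :
  deductive_filter D F -> ~ full F -> exists2 M, maximal_filter M & forall a, F a -> M a.
Proof.
move=> HF HFfull.
have [a0 Ha0] : exists a0, ~ F a0 by apply/existsNP.
have HQ C : (exists X, C X) -> chain C ->
    (forall X, C X -> [/\ deductive_filter D X, ~ full X & forall a, F a -> X a]) ->
    ~ full (fun a => exists2 X, C X & X a).
  move=> HC0 HC HCX Hfull.
  have [|X HX HXK] := chain_In (v := fun _ => a0) (l := Var 0 :: negl [:: Var 0]) HC0 HC.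
    by move=> g _; apply: Hfull.
  have [HXf HXfull _] := HCX X HX; apply: HXfull.
  apply: (filter_negl_full (L := [:: Var 0]) (v := fun _ => a0) HXf) => //.
    by move=> g [<-|[]]; apply: HXK; left.
  by move=> d Hd; apply: HXK; right.
have [M [HM HMfull HFM HMmax]] := filter_zorn HF HFfull HQ.
by exists M.
Qed.

Lemma filter_maximal_omitting (A : algebra S) (F : A -> Prop) e :
  deductive_filter D F -> ~ F e ->
  exists M, [/\ deductive_filter D M, ~ M e, (forall a, F a -> M a) &
    forall N, deductive_filter D N -> ~ N e -> (forall a, M a -> N a) -> forall a, N a -> M a].
Proof.
move=> HF He; apply: (filter_zorn HF He) => C _ _ HCX [X HX HXe].
by have [_ HXe' _] := HCX X HX; apply: HXe'.
Qed.

Lemma Spec_proper (A : algebra S) (F : A -> Prop) : in_Spec D F -> ~ full F.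
Proof. by case=> _ HF _ Hfull; apply: HF => a; split. Qed.

Lemma Spec_of_omitting (A : algebra S) (F : A -> Prop) e :
  deductive_filter D F -> ~ F e ->
  (forall N, deductive_filter D N -> ~ N e -> (forall a, F a -> N a) -> forall a, N a -> F a) ->
  in_Spec D F.
Proof.
move=> HF HFe HFmax; split=> // [Hfull|[G [H [HG HH HGF HHF HFGH]]]].
  by apply: HFe; apply/Hfull.
have above_e N : deductive_filter D N -> ~ same_set N F ->
    (forall a, F a -> N a) -> N e.
  move=> HN HNF HFN; apply: contrapT => HNe; apply: HNF => a.
  by split; [apply: HFmax|apply: HFN].
apply/HFe/HFGH; split.
  by apply: above_e => // a /HFGH [].
by apply: above_e => // a /HFGH [].
Qed.

Lemma maximal_filter_Spec (A : algebra S) (M : A -> Prop) : maximal_filter M -> in_Spec D M.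
Proof.
case=> HM HMfull HMmax; have [e He] : exists e, ~ M e by apply/existsNP.
apply: (Spec_of_omitting HM He) => N HN HNe HMN.
by apply: HMmax => // HNfull; apply/HNe/HNfull.
Qed.

Lemma maximal_filter_maximal_in_Spec (A : algebra S) (M : A -> Prop) :
  maximal_filter M -> maximal_in_Spec D M.
Proof.
move=> HMmax; split; first exact: maximal_filter_Spec.
case: HMmax => _ _ HMmax H HH; apply: HMmax => //; [by case: HH|exact: Spec_proper].
Qed.

Lemma Spec_maximal_extension (A : algebra S) (H : A -> Prop) :
  in_Spec D H -> exists2 M, maximal_filter M & forall a, H a -> M a.
Proof.
by move=> HH; apply: filter_maximal_extension; [case: HH|apply: Spec_proper].
Qed.

Lemma Spec_meet_prime (A : algebra S) (F : A -> Prop) (Es : seq (A -> Prop)) :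
  in_Spec D F ->
  (forall E, List.In E Es -> deductive_filter D E /\ forall a, F a -> E a) ->
  (forall a, (forall E, List.In E Es -> E a) -> F a) ->
  exists2 E, List.In E Es & forall a, E a -> F a.
Proof.
case=> HF HFfull HFirr; elim: Es => [|E Es IH] HEs Hcap.
  by case: HFfull => a; split=> // _; apply: Hcap.
have [HE HFE] := HEs E (or_introl erefl).
pose I a := forall E', List.In E' Es -> E' a.
have HI : deductive_filter D I.
  by apply: filter_bigcap => E' HE'; apply: (HEs E' (or_intror HE')).1.
case: (pselect (forall a, E a -> F a)) => [HEF|HEF]; first by exists E => //; left.
case: (pselect (forall a, I a -> F a)) => [HIF|HIF].
  have [E' HE' HE'F] := IH (fun E' H => HEs E' (or_intror H)) HIF.
  by exists E' => //; right.
case: HFirr; exists E, I; split=> //.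
- by move=> HEF'; apply: HEF => a /HEF'.
- by move=> HIF'; apply: HIF => a /HIF'.
- move=> a; split=> [Fa|[Ea Ia]]; last by apply: Hcap => E' [<-|/Ia].
  by split=> [|E' HE']; [apply: HFE|apply: (HEs E' (or_intror HE')).2].
Qed.

Definition btw_arg k (gam : nat -> nat -> term S) i :=
  negl (map (gam i) (iota 0 k)) ++ flatten (map (fun j => map (gam j) (iota 0 k)) (iota 0 i)).

Lemma btw_arg_nonempty k gam i : nontrivial -> 1 <= k -> btw_arg k gam i <> [::].
Proof.
move=> HNT Hk; have Hgam : map (gam i) (iota 0 k) <> [::] by case: (k) Hk.
by rewrite /btw_arg; case: (negl _) (negl_nonempty HNT Hgam).
Qed.

Lemma btw_arg_subst f k gam i : nontrivial -> 1 <= k ->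
  map (subst f) (negl (btw_arg k gam i)) = negl (btw_arg k (fun i t => subst f (gam i t)) i).
Proof.
move=> HNT Hk; rewrite -negl_subst; last exact: btw_arg_nonempty.
rewrite /btw_arg map_cat -negl_subst; last by case: (k) Hk.
rewrite map_flatten -!map_comp; congr (negl (_ ++ flatten _)).
by apply: eq_map => j /=; rewrite -map_comp.
Qed.

Lemma btw_transfer n (A : algebra S) (F : A -> Prop) k gam (u : nat -> A) b :
  btw_law D negf n -> deductive_filter D F -> nontrivial -> 1 <= k ->
  (forall i, i <= n -> fg (adjoin F u (negl (btw_arg k gam i))) b) -> F b.
Proof.
move=> Hbtw HF HNT Hk Hb.
have HFth := filter_has_theorems HF.
have [G [v [phi [HG _ Hphi]]]] := common_normal_form (r := n.+1) (b := fun _ => b) HFth Hb.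
have [G' HG' HdG'] := add_bridges (t := fun _ => phi 0) HFth HG
  (fun j Hj => conj (Hphi j Hj).1 (etrans (Hphi j Hj).2 (esym (Hphi 0 isT).2))).
rewrite -(Hphi 0 isT).2; apply: (filter_eval HF _ HG').
apply: (Hbtw k Hk G' (fun i t => to_even (gam i t))) => i Hi.
by rewrite -btw_arg_subst //; apply: HdG'.
Qed.

Section BoundedWidth.
Variable n : nat.

Local Notation x_ i j := (i * n.+1 + j).

Lemma separating_valuation (A : algebra S) (M : nat -> A -> Prop) :
  (forall i, i <= n -> maximal_filter (M i)) ->
  (forall i j, i <= n -> j <= n -> i <> j -> ~ same_set (M i) (M j)) ->
  exists u : nat -> A, forall i j, i <= n -> j <= n ->
    M i (u (x_ i j)) /\ (i <> j -> ~ M j (u (x_ i j))).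
Proof.
move=> HM HMdist.
have [a0 _] : exists a0, ~ M 0 a0 by have [_ HM0 _] := HM 0 isT; apply/existsNP.
have /choice [c Hc] : forall p : nat * nat, exists a : A,
    p.1 <= n -> p.2 <= n -> M p.1 a /\ (p.1 <> p.2 -> ~ M p.2 a).
  move=> [i j] /=; case: (pselect (i <= n /\ j <= n)) => [[Hi Hj]|Hij]; last first.
    by exists a0 => Hi Hj; case: Hij.
  case: (eqVneq i j) => [<-|/eqP Hij].
    have [HMi _ _] := HM i Hi; have [phi0 Hphi0] := exists_theorem.
    by exists (eval (fun _ => a0) phi0); split=> //; apply: (filter_has_theorems HMi).
  have [a [Ha Hna]] := maximal_filters_separate (HM i Hi) (HM j Hj) (HMdist i j Hi Hj Hij).
  by exists a.
exists (fun w => c (w %/ n.+1, w %% n.+1)) => i j Hi Hj.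
have Hj' : j < n.+1 by [].
by rewrite divnMDl // divn_small // addn0 modnMDl modn_small //; apply: (Hc (i, j)).
Qed.

Lemma btw_bounds_maximal_filters (A : algebra S) (F : A -> Prop) (M : nat -> A -> Prop) :
  btw_law D negf n -> in_Spec D F ->
  (forall i, i <= n -> maximal_filter (M i) /\ forall a, F a -> M i a) ->
  ~ (forall i j, i <= n -> j <= n -> i <> j -> ~ same_set (M i) (M j)).
Proof.
move=> Hbtw HF HM HMdist; have HNT := Spec_nontrivial HF; have [HFf _ _] := HF.
have HMmax i Hi := (HM i Hi).1.
have [u Hu] := separating_valuation HMmax HMdist.
pose L i := map (fun j => @Var S (x_ i j)) (iota 0 n.+1).
have HL i : L i <> [::] by [].
set k := size (negf n.+1).
have Hk : 1 <= k by rewrite /k; case: (negf _) (negf_nonempty HNT (ltn0Sn n)).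
pose gam i t := nth (Var 0) (negl (L i)) t.
have Hgam i : map (gam i) (iota 0 k) = negl (L i).
  have Hsize : size (negl (L i)) = k by rewrite /Defs.negl size_map /L size_map size_iota.
  by rewrite -[in RHS](mkseq_nth (Var 0) (negl (L i))) Hsize.
have neg_other i j : i <= n -> j <= n -> i <> j ->
    forall d, List.In d (negl (L i)) -> M j (eval u d).
  move=> Hi Hj Hij; apply: maximal_filter_negl (HMmax j Hj) (HL i) _.
  exists (Var (x_ i j)); last exact: (Hu i j Hi Hj).2.
  by apply/In_map; exists j => //; apply/In_iota; lia.
have neg_neg_own i : i <= n -> forall d, List.In d (negl (negl (L i))) -> M i (eval u d).
  move=> Hi; apply: maximal_filter_double_negl HNT (HMmax i Hi) (HL i) _.
  by move=> g /In_map [j /In_iota Hj ->]; apply: (Hu i j Hi _).1; lia.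
pose Es := map (fun i => fg (adjoin F u (negl (btw_arg k gam i)))) (iota 0 n.+1).
have [_ /In_map [i /In_iota Hi ->] HEF] : exists2 Ei, List.In Ei Es & forall a, Ei a -> F a.
  apply: (Spec_meet_prime HF).
  move=> Ei /In_map [i _ ->]; split; last by move=> a Fa; apply: fg_sub; left.
    by apply: fg_filter; apply: adjoin_has_theorems; apply: filter_has_theorems.
  move=> a Ha; apply: btw_transfer Hbtw HFf HNT Hk _ => i Hi.
  by apply: Ha; apply/In_map; exists i => //; apply/In_iota; lia.
have Hin : i <= n by lia.
have [[HMi HMfull _] HFM] := HM i Hin; apply: HMfull.
apply: (filter_negl_full (v := u) HMi (@btw_arg_nonempty k gam i HNT Hk)).
  move=> g; rewrite /btw_arg Hgam => /List.in_app_iff [/neg_neg_own|]; first exact.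
  move=> /In_flatten [l [/In_map [j /In_iota Hj ->]]]; rewrite Hgam.
  by apply: neg_other => //; lia.
by move=> d Hd; apply/HFM/HEF/fg_sub; right; exists d.
Qed.

End BoundedWidth.

Lemma theory_adjoin_full_negl (F : Fm S -> Prop) Y :
  deductive_filter D F -> Y <> [::] -> full (D (fun x => F x \/ List.In x Y)) ->
  forall d, List.In d (negl Y) -> F d.
Proof.
move=> HF HY Hfull.
have [l Hl HlK] :=
  deriv_finite_seq HD (K := negl [:: Var 0] ++ [:: Var 0]) (fun x _ => Hfull x).
pose lF := [seq g <- l | `[< F g >]].
have Hincons : inconsistent D (lF ++ Y).
  move=> phi; apply: (deriv_cut HD _ (inconsistent_negl (L := [:: Var 0]) _ phi)) => // x Hx.
  apply: (deriv_mono HD _ (HlK x Hx)) => g Hg; apply/List.in_app_iff.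
  case: (Hl g Hg) => [Fg|]; [left|by right].
  by apply/List.filter_In; split=> //; apply/asboolP.
move=> d Hd; apply: (theory_closed HD HF).
apply: (deriv_mono HD _ ((negf_IL lF HY).1 Hincons d Hd)).
by move=> g /List.filter_In [_ /asboolP].
Qed.

Definition Spec_top_width n :=
  forall (A : algebra S) (F : A -> Prop), in_Spec D F ->
    exists Gs : seq (A -> Prop),
      [/\ 1 <= size Gs, size Gs <= n,
          (forall G, List.In G Gs -> maximal_in_Spec D G)
        & (forall H : A -> Prop, in_Spec D H -> (forall a, F a -> H a) ->
             exists2 G, List.In G Gs & (forall a, H a -> G a))].

Lemma btw_Spec_top_width n : btw_law D negf n -> Spec_top_width n.
Proof.
move=> Hbtw A F HF.
pose distinct_above m := exists M : nat -> A -> Prop,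
  (forall i, i < m -> maximal_filter (M i) /\ forall a, F a -> M i a) /\
  (forall i j, i < m -> j < m -> i <> j -> ~ same_set (M i) (M j)).
have bound m : distinct_above m -> m <= n.
  move=> [M [HM HMdist]]; rewrite leqNgt; apply/negP => Hnm.
  apply: (btw_bounds_maximal_filters Hbtw HF (M := M)) => [i Hi|i j Hi Hj].
    by apply: HM; lia.
  by apply: HMdist; lia.
have one : distinct_above 1.
  have [M0 HM0 HFM0] := Spec_maximal_extension HF.
  by exists (fun _ => M0); split=> [//|[|i] [|j]].
have [m /asboolP Hm Hmax] := ex_maxnP (P := fun m => `[< distinct_above m >])
  (ex_intro _ 1 (asboolT one)) (fun m' Hm' => bound m' (asboolW Hm')).
have [M [HM HMdist]] := Hm.
have HMIn G : List.In G (map M (iota 0 m)) -> exists2 i, i < m & G = M i.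
  by move=> /In_map [i /In_iota Hi ->]; exists i => //; lia.
exists (map M (iota 0 m)); rewrite size_map size_iota; split.
- exact: Hmax 1 (asboolT one).
- exact: bound m Hm.
- by move=> G /HMIn [i Hi ->]; apply/maximal_filter_maximal_in_Spec/(HM i Hi).1.
move=> H HH HFH; have [N HN HHN] := Spec_maximal_extension HH.
case: (pselect (exists2 i, i < m & same_set N (M i))) => [[i Hi HNi]|Hnew].
  by exists (M i) => [|a /HHN /HNi //]; apply/In_map; exists i => //; apply/In_iota; lia.
suff /asboolT/Hmax : distinct_above m.+1 by rewrite ltnn.
exists (fun i => if i == m then N else M i); split=> [i|i j].
  by case: eqVneq => [_ _|Hne Hi]; [split=> // a /HFH/HHN|apply: HM; lia].
case: eqVneq => [->|Him]; case: eqVneq => [->|Hjm] Hi Hj Hij //.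
- by move=> HNj; apply: Hnew; exists j => //; lia.
- by move=> HiN; apply: Hnew; exists i => [|a]; [lia|split=> /HiN].
- by apply: HMdist; lia.
Qed.

Lemma Spec_top_width_btw n : Spec_top_width n -> btw_law D negf n.
Proof.
move=> Hcover k Hk G gam psi Hpsi; apply: contrapT => HGpsi.
have HNT := underivable_nontrivial HGpsi.
have [F [HF HFpsi HGF HFmax]] :=
  filter_maximal_omitting (@theory_filter _ _ HD (set_of G)) HGpsi.
have [Gs [_ HGsn HGsmax HGscov]] := Hcover (Fm S) F (Spec_of_omitting HF HFpsi HFmax).
pose T i := D (fun x => F x \/ List.In x (btw_arg k gam i)).
have HTproper i : i <= n -> ~ full (T i).
  move=> Hi /(theory_adjoin_full_negl HF (@btw_arg_nonempty k gam i HNT Hk)) HFneg.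
  apply/HFpsi/(theory_closed HD HF)/(deriv_mono HD _ (Hpsi i Hi)) => x.
  by move=> /List.in_app_iff [Hx|/HFneg //]; apply/HGF/(deriv_refl HD).
have /choice [f Hf] : forall i, exists j, i <= n ->
    j < size Gs /\ forall x, T i x -> nth (fun _ => True) Gs j x.
  move=> i; case: (leqP i n) => [Hi|Hni]; last by exists 0 => Hi; lia.
  have [Mi HMi HTMi] := filter_maximal_extension (@theory_filter _ _ HD _) (HTproper i Hi).
  have [Gi HGi HMGi] := HGscov _ (maximal_filter_Spec HMi)
    (fun x Fx => HTMi _ (deriv_refl HD (or_introl Fx))).
  have [j Hj HGj] := In_nthP (fun _ => True) HGi.
  by exists j => _; split=> // x /HTMi /HMGi; rewrite HGj.
have [i [i' [Hii' Hi'n Hfii']]] :=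
  pigeonhole (m := size Gs) (f := f) (fun i Hi => (Hf i (leq_trans Hi HGsn)).1).
have Hin : i <= n by lia.
have [HGSpec _] := HGsmax _ (In_nth (fun _ => True) (Hf i Hin).1).
have [HGf _ _] := HGSpec; apply: (Spec_proper HGSpec).
apply: (filter_negl_full (A := Fm S) (L := map (gam i) (iota 0 k)) (v := Var) HGf).
- by case: (k) Hk.
- move=> g Hg; rewrite eval_Var Hfii'; apply: (Hf i' (leq_trans Hi'n HGsn)).2.
  apply/(deriv_refl HD); right; apply/List.in_app_iff; right.
  apply/In_flatten; exists (map (gam i) (iota 0 k)); split=> //.
  by apply/In_map; exists i => //; apply/In_iota; lia.
- move=> d Hd; rewrite eval_Var; apply: (Hf i Hin).2.
  by apply/(deriv_refl HD); right; apply/List.in_app_iff; left.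
Qed.

End Protoalgebraic.

Theorem theorem8p6 (S : signature) (D : fset S -> term S -> Prop)
  (HD : is_logic D) (Hproto : protoalgebraic D)
  (negf : nat -> seq (term S)) (HIL : IL_family D negf)
  (n : nat) (hn : 1 <= n) :
  btw_law D negf n <->
  (forall (A : algebra S) (F : A -> Prop), in_Spec D F ->
     exists Gs : seq (A -> Prop),
       [/\ 1 <= size Gs, size Gs <= n,
           (forall G, List.In G Gs -> maximal_in_Spec D G)
         & (forall H : A -> Prop, in_Spec D H -> (forall a, F a -> H a) ->
              exists2 G, List.In G Gs & (forall a, H a -> G a))]).
Proof.
case: Hproto => Delta [HDne HDvars HDrefl HDmp]; case: HIL => Hvars HIL.
split; first exact: (btw_Spec_top_width HD HDne HDvars HDrefl HDmp Hvars HIL).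
exact: (Spec_top_width_btw HD HDne HDrefl Hvars HIL).
Qed.
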